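(* Let $X$ be a paracompact $\sigma$-space, let $\{F_\alpha:\alpha\in A_i\}$ be a discrete family of closed subsets of $X$, and put $F_i=\bigcup\{F_\alpha:\alpha\in A_i\}$. If the pair $(X,F_\alpha)$ is semicanonical for every $\alpha\in A_i$, then the pair $(X,F_i)$ is semicanonical.
   Context: A $\sigma$-space is a regular $T_1$ space with a $\sigma$-discrete network. For a closed subset $A$ of $X$, the pair $(X,A)$ is semicanonical if there is an open cover $\omega$ of $X\setminus A$ such that every open neighborhood $OA$ of $A$ contains an open neighborhood $UA$ of $A$ such that every $G\in\omega$ with $G\cap UA\neq\varnothing$ satisfies $G\subseteq OA$. *)

From mathcomp Require Import all_boot all_order.
From mathcomp Require Import all_classical all_reals all_analysis.
Set Implicit Arguments. Unset Strict Implicit. Unset Printing Implicit Defensive.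
Local Open Scope classical_set_scope.

Section Defs.
Context {X : topologicalType}.

Definition discrete_family (I : Type) (F : I -> set X) : Prop :=
  forall x : X, exists U : set X, [/\ open U, U x &
    forall i j : I, U `&` F i !=set0 -> U `&` F j !=set0 -> i = j].

Definition discrete_collection (N : set (set X)) : Prop :=
  discrete_family (fun S : {S : set X | N S} => proj1_sig S).

Definition locally_finite_family (I : Type) (F : I -> set X) : Prop :=
  forall x : X, exists U : set X, [/\ open U, U x &
    finite_set [set i | U `&` F i !=set0]].

Definition network (N : set (set X)) : Prop :=
  forall (x : X) (U : set X), open U -> U x ->
    exists M : set X, [/\ N M, M x & M `<=` U].

Definition sigma_discrete (N : set (set X)) : Prop :=
  exists Nn : nat -> set (set X),
    (forall n, discrete_collection (Nn n)) /\ N = \bigcup_n Nn n.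

Definition sigma_space : Prop :=
  [/\ regular_space X, accessible_space X &
      exists N : set (set X), network N /\ sigma_discrete N].

Definition paracompact : Prop :=
  forall (I : Type) (G : I -> set X), (forall i, open (G i)) ->
    \bigcup_i G i = setT ->
    exists (J : Type) (V : J -> set X),
      [/\ forall j, open (V j), \bigcup_j V j = setT,
          forall j, exists i, V j `<=` G i & locally_finite_family V].

(* The pair (X, A) is semicanonical (A is assumed closed). *)
Definition semicanonical (A : set X) : Prop :=
  exists omega : set (set X),
    [/\ forall G, omega G -> open G /\ G `<=` ~` A,
        \bigcup_(G in omega) G = ~` A &
        forall OA : set X, open OA -> A `<=` OA ->
          exists UA : set X, [/\ open UA, A `<=` UA, UA `<=` OA &
            forall G, omega G -> G `&` UA !=set0 -> G `<=` OA]].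

End Defs.

(* Discreteness and regularity give an open cover of X whose members have
   closures meeting at most one F a; paracompactness refines it to a locally
   finite open cover V.  The complement of the union is covered by the V j whose
   closures miss every F c, together with the traces G `&` V j of the members G
   of the cover for F a, where a is the only index with F a possibly meeting the
   closure of V j.  Given OA, take the union over b of the neighbourhoods U b
   supplied for F b, each minus the closure of the union of the V j whose
   closures miss F b; by local finiteness that closure still misses F b. *)
From mathcomp Require Import all_boot all_order.
From mathcomp Require Import all_classical all_reals all_analysis.
From mathcomp Require Import finmap.
Local Open Scope classical_set_scope.

Section LocallyFinite.
Context {X : topologicalType}.

Lemma locally_finite_closure_bigcup (J : Type) (V : J -> set X) (Q : set J)
    (y : X) :
  locally_finite_family V -> (forall j, Q j -> ~ closure (V j) y) ->
  ~ closure (\bigcup_(j in Q) V j) y.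
Proof.
move=> lfV notcl clQ; have [W [oW Wy finW]] := lfV y.
have [D HD] := finite_fsetP.1 (finite_image V finW).
(* Near y only the finitely many members V j meeting W matter, and y has a
   neighbourhood avoiding each of their closures that does not contain y. *)
pose avoid_nbhs (A : set X) := [set z | closure A y \/ ~ closure A z].
have nbhs_avoid : nbhs y (\bigcap_(A in [set` D]) avoid_nbhs A).
  apply: filter_bigI => A _.
  have [clA|nclA] := pselect (closure A y).
    by apply: filterS filterT => z _; left.
  apply: (@filterS _ _ _ (~` closure A)); first by move=> z; right.
  by apply: open_nbhs_nbhs; split => //; rewrite openC; exact: closed_closure.
have [z [[j Qj Vjz] [Wz avz]]] := clQ _ (filterI (open_nbhs_nbhs (conj oW Wy))
  nbhs_avoid).
have /avz [/(notcl j Qj)//|] : [set` D] (V j).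
  by rewrite -HD; exists j => //; exists z.
by apply; exact: subset_closure.
Qed.

End LocallyFinite.

Section MeetsAtMostOne.
Context {X : topologicalType} {I : Type} (F : I -> set X).

Definition meets_at_most_one (A : set X) : Prop :=
  forall c d, A `&` F c !=set0 -> A `&` F d !=set0 -> c = d.

Lemma meets_at_most_oneS {A B : set X} :
  B `<=` A -> meets_at_most_one A -> meets_at_most_one B.
Proof.
move=> BA mA c d [x [Bx Fx]] [y [By Fy]].
by apply: mA; [exists x | exists y]; split => //; exact: BA.
Qed.

Lemma meets_at_most_one_cases {A : set X} : meets_at_most_one A ->
  (forall c, A `&` F c = set0) \/ exists a, forall c, c <> a -> A `&` F c = set0.
Proof.
move=> mA; have [[a Aa]|noA] := pselect (exists a, A `&` F a !=set0).
  right; exists a => c ca; apply/seteqP; split => // z Acz.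
  by apply: ca; apply: mA => //; exists z.
left => c; apply/seteqP; split => // z Acz.
by apply: noA; exists c, z.
Qed.

Lemma regular_closure_meets_at_most_one : regular_space X ->
  discrete_family F -> forall x : X,
  exists P : set X, [/\ open P, P x & meets_at_most_one (closure P)].
Proof.
move=> reg disc x; have [U [oU Ux mU]] := disc x.
have [B] := reg x U (open_nbhs_nbhs (conj oU Ux)).
rewrite nbhsE => -[P [oP Px] PB] clBU.
exists P; split => //; apply: (meets_at_most_oneS (A := U)) mU.
by move=> z /(closureS PB); exact: clBU.
Qed.

Lemma paracompact_cover_meets_at_most_one :
  @paracompact X -> regular_space X -> discrete_family F ->
  exists (J : Type) (V : J -> set X),
    [/\ forall j, open (V j), \bigcup_j V j = setT, locally_finite_family V &
        forall j, meets_at_most_one (closure (V j))].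
Proof.
move=> para reg disc.
pose good (P : set X) := open P /\ meets_at_most_one (closure P).
have cov : \bigcup_(P : {P | good P}) proj1_sig P = setT.
  apply/seteqP; split => // x _.
  have [P [oP Px mP]] := regular_closure_meets_at_most_one reg disc x.
  by exists (exist _ P (conj oP mP)).
have [J [V [oV covV refV lfV]]] :=
  para _ _ (fun P : {P | good P} => (proj2_sig P).1) cov.
exists J, V; split => // j; have [[P [_ mP]] /= VP] := refV j.
exact: meets_at_most_oneS (closureS VP) mP.
Qed.

End MeetsAtMostOne.

Definition semicanonical_cover {X : topologicalType} (A : set X)
    (omega : set (set X)) : Prop :=
  [/\ forall G, omega G -> open G /\ G `<=` ~` A,
      \bigcup_(G in omega) G = ~` A &
      forall OA : set X, open OA -> A `<=` OA ->
        exists UA : set X, [/\ open UA, A `<=` UA, UA `<=` OA &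
          forall G, omega G -> G `&` UA !=set0 -> G `<=` OA]].

Section GluedCover.
Context {X : topologicalType} {I J : Type} (F : I -> set X) (V : J -> set X)
  (om : I -> set (set X)).
Hypotheses (oV : forall j, open (V j)) (covV : \bigcup_j V j = setT)
  (lfV : locally_finite_family V)
  (mV : forall j, meets_at_most_one F (closure (V j)))
  (omF : forall a, semicanonical_cover (F a) (om a)).

Definition glued_cover : set (set X) :=
  [set S | (exists j, S = V j /\ forall c, closure (V j) `&` F c = set0) \/
    exists j a G, [/\ S = G `&` V j, om a G &
      forall c, c <> a -> closure (V j) `&` F c = set0]].

Let notin_set0 {A : set X} (z : X) : A = set0 -> ~ A z.
Proof. by move=> ->. Qed.

Lemma glued_cover_open_disjoint S : glued_cover S ->
  open S /\ S `<=` ~` \bigcup_(a in [set: I]) F a.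
Proof.
case=> [[j [-> Vj0]]|[j [a [G [-> omG Vja]]]]].
  split => // z Vz [c _ Fz].
  by apply: (notin_set0 z (Vj0 c)); split => //; exact: subset_closure.
have [/(_ G omG) [oG GF] _ _] := omF a.
split; first exact: openI.
move=> z [Gz Vz] [c _ Fz]; have [ca|ca] := pselect (c = a).
  by rewrite ca in Fz; exact: GF Gz Fz.
by apply: (notin_set0 z (Vja c ca)); split => //; exact: subset_closure.
Qed.

Lemma glued_cover_bigcup :
  \bigcup_(S in glued_cover) S = ~` \bigcup_(a in [set: I]) F a.
Proof.
apply/seteqP; split; first by move=> z [S /glued_cover_open_disjoint [_]]; apply.
move=> x nFx; have [j _ Vx] : (\bigcup_j V j) x by rewrite covV.
case: (meets_at_most_one_cases F (mV j)) => [Vj0|[a Vja]].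
  by exists (V j) => //; left; exists j.
have [_ omFa _] := omF a.
have : (~` F a) x by move=> Fx; apply: nFx; exists a.
rewrite -omFa => -[G omG Gx].
by exists (G `&` V j) => //; right; exists j, a, G.
Qed.

Lemma glued_cover_shrink (OA : set X) : open OA ->
  \bigcup_(a in [set: I]) F a `<=` OA ->
  exists UA : set X, [/\ open UA, \bigcup_(a in [set: I]) F a `<=` UA,
    UA `<=` OA & forall S, glued_cover S -> S `&` UA !=set0 -> S `<=` OA].
Proof.
move=> oOA FOA.
have /choice [U HU] b : exists Ub, [/\ open Ub, F b `<=` Ub, Ub `<=` OA &
    forall G, om b G -> G `&` Ub !=set0 -> G `<=` OA].
  by have [_ _] := omF b; apply => // z Fz; apply: FOA; exists b.
pose far b := \bigcup_(j in [set j | closure (V j) `&` F b = set0]) V j.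
have F_far b : F b `<=` ~` closure (far b).
  move=> y Fy; apply: locally_finite_closure_bigcup => // j /= Vjb Vjy.
  exact: notin_set0 y Vjb (conj Vjy Fy).
exists (\bigcup_(b in [set: I]) (U b `&` ~` closure (far b))); split.
- apply: bigcup_open => b _; apply: openI; first by case: (HU b).
  by rewrite openC; exact: closed_closure.
- by move=> z [b _ Fz]; exists b => //; split; [case: (HU b) => _ + _ _; apply|
    exact: F_far].
- by move=> z [b _ [Uz _]]; case: (HU b) => _ _ + _; apply.
move=> S glS [y [Sy [b _ [Uby nfar]]]].
case: glS Sy => [[j [-> Vj0]]|[j [a [G [-> omG Vja]]]]] Sy.
  by exfalso; apply: nfar; apply: subset_closure; exists j => //=; exact: Vj0.
have [ba|ba] := pselect (b = a); last first.
  by exfalso; apply: nfar; apply: subset_closure; exists j;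
    [exact: Vja | case: Sy].
subst b; have [_ _ _ /(_ G omG) GOA] := HU a.
by move=> z [Gz _]; apply: GOA => //; exists y; case: Sy.
Qed.

Lemma semicanonical_cover_glued :
  semicanonical_cover (\bigcup_(a in [set: I]) F a) glued_cover.
Proof.
split; [exact: glued_cover_open_disjoint | exact: glued_cover_bigcup |].
exact: glued_cover_shrink.
Qed.

End GluedCover.

Theorem mainTheorem11 (X : topologicalType) (Ai : Type) (F : Ai -> set X) :
  @paracompact X -> @sigma_space X ->
  (forall a, closed (F a)) -> discrete_family F ->
  (forall a, semicanonical (F a)) ->
  semicanonical (\bigcup_(a in [set: Ai]) F a).
Proof.
move=> para [reg _ _] _ disc /choice [om omF].
have [J [V [oV covV lfV mV]]] :=
  paracompact_cover_meets_at_most_one F para reg disc.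
by exists (glued_cover F V om); exact: semicanonical_cover_glued.
Qed.
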